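(* Let $\{X_n\}_{n\in\mathbb{N}}$ be a family of real Banach spaces, $Z_0=\bigoplus^{c_0}_{n\in\mathbb{N}}X_n$, and let $A$ be a separable subset of $Z_0$. Let $Y$ be a real Banach space and $\Delta:S_{Z_0}\to S_Y$ a surjective isometry. Then there exist separable subspaces $M_n\subseteq X_n$ ($n\in\mathbb{N}$) and $N\subseteq Y$ such that $A\subseteq\bigoplus^{c_0}_{n\in\mathbb{N}}M_n$ and $\Delta\big(S_{\bigoplus^{c_0}_{n\in\mathbb{N}}M_n}\big)=S_N$.
   Context: $\bigoplus^{c_0}_{n\in\mathbb{N}}X_n$ is the space of sequences $(x_n)$ with $x_n\in X_n$ and $\|x_n\|\to 0$, with the sup norm; $S_E$ denotes the unit sphere of a normed space $E$. *)

From HB Require Import structures.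
From mathcomp Require Import all_boot all_order all_algebra.
From mathcomp Require Import all_classical all_reals all_analysis.
Set Implicit Arguments. Unset Strict Implicit. Unset Printing Implicit Defensive.
Import Order.TTheory GRing.Theory Num.Theory.
Import numFieldNormedType.Exports.
Local Open Scope classical_set_scope.
Local Open Scope ring_scope.

Section Defs.
Variable R : realType.

Definition is_subspace (V : normedModType R) (M : set V) : Prop :=
  M 0 /\ (forall (a : R) (x y : V), M x -> M y -> M (a *: x + y)) /\ closed M.

Definition separable_in (V : normedModType R) (S : set V) : Prop :=
  exists D : set V, countable D /\ D `<=` S /\
    forall x, S x -> forall e : R, 0 < e -> exists2 d, D d & `|x - d| < e.

Definition sphere_of (V : normedModType R) (N : set V) : set V :=
  [set y | N y /\ `|y| = 1].

Definition in_c0 (X : nat -> normedModType R) (x : forall n, X n) : Prop :=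
  (fun n => `|x n|) @ \oo --> (0 : R).

Definition c0norm (X : nat -> normedModType R) (x : forall n, X n) : R :=
  sup (range (fun n => `|x n|)).

Definition c0sub (X : nat -> normedModType R) (x y : forall n, X n) : forall n, X n :=
  fun n => x n - y n.

Definition c0sum_of (X : nat -> normedModType R) (M : forall n, set (X n))
  : set (forall n, X n) :=
  [set x | in_c0 x /\ forall n, M n (x n)].

Definition c0sphere_of (X : nat -> normedModType R) (M : forall n, set (X n))
  : set (forall n, X n) :=
  [set x | c0sum_of M x /\ c0norm x = 1].

Definition c0separable (X : nat -> normedModType R) (A : set (forall n, X n)) : Prop :=
  exists D : set (forall n, X n), countable D /\ D `<=` A /\
    forall x, A x -> forall e : R, 0 < e -> exists2 d, D d & c0norm (c0sub x d) < e.

End Defs.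

From HB Require Import structures.
From mathcomp Require Import all_boot all_order all_algebra.
From mathcomp Require Import all_classical all_reals all_analysis.
From mathcomp Require Import lra.
Import Order.TTheory GRing.Theory Num.Theory.
Import numFieldNormedType.Exports.
Local Open Scope classical_set_scope.
Local Open Scope ring_scope.

(* Take a countable family F in Z_0 that contains a dense subset of A and is
   closed under two operations: for rationals q_i and x_i in F, a
   Delta-preimage of w/|w|, where w = sum q_i Delta(x_i) over the x_i lying on
   the sphere; and the normalisation of the finitely supported vector whose
   m-th coordinate is a rational combination of the x_i(m). Such an F is
   obtained by iterating countably many finitary operations omega times.
   Let M_n be the closed span of {x n | x in F} and N that of
   Delta(F /\ S_Z0). The second operation makes F /\ S_Z0 dense in the sphere
   of the c_0-sum of the M_n, so Delta maps that sphere into the closed set N.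
   The first makes Delta(F /\ S_Z0) dense in S_N; as Delta is an isometry,
   the preimage x of a point of S_N is a sup-norm limit of members of F, so
   every x n lies in M_n. *)

Lemma countable_sub_range {T : Type} (t0 : T) {D : set T} : countable D ->
  exists f : nat -> T, D `<=` range f.
Proof.
move=> /countable_injP [f finj].
pose g n := match pselect (exists x, D x /\ f x = n) with
  | left h => projT1 (cid h) | right _ => t0 end.
exists g => x Dx; exists (f x) => //.
rewrite /g; case: pselect => [h|h]; last by exfalso; apply: h; exists x.
have [Dy fy] := projT2 (cid h).
by apply: finj; rewrite ?inE.
Qed.

Lemma zip_unzip_map (A B C : Type) (f : B -> C) (s : seq (A * B)) :
  zip (unzip1 s) (map f (unzip2 s)) = [seq (p.1, f p.2) | p <- s].
Proof. by rewrite -map_comp zip_map. Qed.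

Lemma rat_approx {R : realType} (a d : R) : 0 < d ->
  exists q : rat, `|a - ratr q| < d.
Proof.
move=> d0; have /rat_in_itvoo[q /itvP hq] : a - d < a + d by rewrite ltrD2l gtrN.
by exists q; rewrite ltr_distlC !hq.
Qed.

Lemma mulr_lt_of_lt_div {R : numFieldType} (b c e : R) :
  0 <= b -> 0 <= c -> c < e / (b + 1) -> b * c < e.
Proof.
move=> b0 c0 hc; apply: (le_lt_trans (y := (b + 1) * c)).
  by rewrite ler_wpM2r // lerDl.
by rewrite mulrC -ltr_pdivlMr // ltr_wpDl.
Qed.

Section ClosedSpan.
Context {R : realType} {V : normedModType R}.

Lemma closed_approx {M : set V} {x} : closed M ->
  (forall e : R, 0 < e -> exists2 m, M m & `|x - m| < e) -> M x.
Proof.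
move=> cM H; apply: cM => B /nbhs_ballP [e /= e0 hB].
have [m Mm hm] := H e e0; exists m; split => //; apply: hB.
by rewrite -ball_normE /=.
Qed.

Lemma closure_approx {A : set V} {x} : closure A x ->
  forall e : R, 0 < e -> exists2 a, A a & `|x - a| < e.
Proof.
move=> cl e e0; have [a [Aa ha]] := cl _ (nbhsx_ballx x e e0).
by exists a => //; move: ha; rewrite -ball_normE.
Qed.

Lemma dist_normalize {x w : V} : `|x| = 1 -> w != 0 ->
  `|x - `|w|^-1 *: w| <= 2 * `|x - w|.
Proof.
move=> x1 w0; have wp : 0 < `|w| by rewrite normr_gt0.
have hw : `|w - `|w|^-1 *: w| = `| `|w| - 1|.
  rewrite -{1}(scale1r w) -scalerBl normrZ -{2}(ger0_norm (ltW wp)) -normrM.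
  by rewrite mulrBl mul1r mulVf ?gt_eqF.
have := ler_distD w x (`|w|^-1 *: w); have := ler_dist_dist w x.
rewrite hw x1 distrC; lra.
Qed.

Context {I : countType} (g : I -> V).

Definition closed_span : set V :=
  [set x | forall M, is_subspace M -> (forall i, M (g i)) -> M x].

Definition ratcomb (s : seq (rat * I)) : V := \sum_(p <- s) ratr p.1 *: g p.2.

Lemma closed_span_subspace : is_subspace closed_span.
Proof.
split; first by move=> M [].
split=> [a x y hx hy M hM hg|x cx M hM hg].
  by have [_ [hc _]] := hM; apply: hc; [apply: hx | apply: hy].
have [_ [_ cM]] := hM; apply: cM; apply: (closureS _ cx) => y hy; exact: hy.
Qed.

Lemma closed_span_gen i : closed_span (g i).
Proof. by move=> M _; apply. Qed.

Lemma closed_span_ratcomb s : closed_span (ratcomb s).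
Proof.
have [h0 [hc _]] := closed_span_subspace.
elim: s => [|p s IH]; first by rewrite /ratcomb big_nil.
by rewrite /ratcomb big_cons; apply: hc => //; apply: closed_span_gen.
Qed.

Lemma ratcomb_cat s1 s2 : ratcomb (s1 ++ s2) = ratcomb s1 + ratcomb s2.
Proof. by rewrite /ratcomb big_cat. Qed.

Lemma ratcombZ q s :
  ratcomb [seq (q * p.1, p.2) | p <- s] = ratr q *: ratcomb s.
Proof.
rewrite /ratcomb big_map scaler_sumr; apply: eq_bigr => p _.
by rewrite rmorphM scalerA.
Qed.

Definition rat_approximable : set V :=
  [set x | forall e : R, 0 < e -> exists s, `|x - ratcomb s| < e].

Lemma rat_approximableD x y : rat_approximable x -> rat_approximable y ->
  rat_approximable (x + y).
Proof.
move=> hx hy e e0; have e2 : 0 < e / 2 by rewrite divr_gt0.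
have [s1 h1] := hx _ e2; have [s2 h2] := hy _ e2.
exists (s1 ++ s2); rewrite ratcomb_cat opprD addrACA.
by rewrite (splitr e) (le_lt_trans (ler_normD _ _)) // ltrD.
Qed.

Lemma rat_approximableZ a x : rat_approximable x -> rat_approximable (a *: x).
Proof.
move=> hx e e0; have e2 : 0 < e / 2 by rewrite divr_gt0.
have pos_div (b : R) : 0 <= b -> 0 < e / 2 / (b + 1).
  by move=> b0; rewrite !divr_gt0 ?ltr_wpDl.
have [q hq] := rat_approx a _ (pos_div _ (normr_ge0 x)).
have [s hs] := hx _ (pos_div _ (normr_ge0 (ratr q : R))).
exists [seq (q * p.1, p.2) | p <- s]; rewrite ratcombZ.
rewrite -[a *: x](subrK (ratr q *: x)) -scalerBl -addrA -scalerBr.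
rewrite (splitr e) (le_lt_trans (ler_normD _ _)) // ltrD // normrZ.
  by rewrite mulrC mulr_lt_of_lt_div.
by rewrite mulr_lt_of_lt_div.
Qed.

Lemma rat_approximable_closed : closed rat_approximable.
Proof.
move=> x cx e e0; have e2 : 0 < e / 2 by rewrite divr_gt0.
have [t Tt ht] := closure_approx cx _ e2; have [s hs] := Tt _ e2.
by exists s; rewrite (splitr e) (le_lt_trans (ler_distD t _ _)) // ltrD.
Qed.

Lemma rat_approximable_subspace : is_subspace rat_approximable.
Proof.
split; first by move=> e e0; exists [::]; rewrite /ratcomb big_nil subr0 normr0.
split; last exact: rat_approximable_closed.
by move=> a x y hx hy; apply: rat_approximableD => //; apply: rat_approximableZ.
Qed.

Lemma closed_span_approx {x} : closed_span x -> rat_approximable x.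
Proof.
apply; first exact: rat_approximable_subspace.
move=> i e e0; exists [:: (1%R, i)].
by rewrite /ratcomb big_seq1 rmorph1 scale1r subrr normr0.
Qed.

Lemma closed_span_separable : separable_in closed_span.
Proof.
exists (range ratcomb); split.
  exact: (sub_countable (card_image_le ratcomb setT)).
split; first by move=> _ [s _ <-]; apply: closed_span_ratcomb.
move=> x cx e e0; have [s hs] := closed_span_approx cx _ e0.
by exists (ratcomb s) => //; exists s.
Qed.

End ClosedSpan.

Section C0Sum.
Context {R : realType} {X : nat -> normedModType R}.
Implicit Types x y z v : forall n, X n.

Lemma in_c0P x : in_c0 x <->
  forall e : R, 0 < e -> exists K, forall n, (K <= n)%N -> `|x n| < e.
Proof.
split=> [/cvgrPdist_lt h e e0|H].
  have [K _ hK] := h e e0; exists K => n hn.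
  by have := hK n hn; rewrite /= sub0r normrN normr_id.
apply/cvgrPdist_lt => e e0; have [K hK] := H e e0.
by exists K => // n hn /=; rewrite sub0r normrN normr_id hK.
Qed.

Lemma in_c0_bounded x : in_c0 x -> exists B : R, forall n, `|x n| <= B.
Proof.
move=> /in_c0P /(_ 1 ltr01) [K hK].
suff [B hB] : exists B : R, forall n, (n < K)%N -> `|x n| <= B.
  exists (Num.max B 1) => n; case: (ltnP n K) => hn.
    by rewrite le_max hB.
  by rewrite le_max (ltW (hK n hn)) orbT.
elim: K {hK} => [|K [B hB]]; first by exists 0.
exists (Num.max B `|x K|) => n; rewrite ltnS leq_eqVlt => /orP [/eqP ->|hn].
  by rewrite le_max lexx orbT.
by rewrite le_max hB.
Qed.

Lemma coord_le_c0norm {x} n : in_c0 x -> `|x n| <= c0norm x.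
Proof.
move=> /in_c0_bounded [B hB]; apply: sup_upper_bound; last by exists n.
by split; [exists `|x 0%N|, 0%N | exists B => _ [m _ <-]].
Qed.

Lemma c0norm_le x (r : R) : (forall n, `|x n| <= r) -> c0norm x <= r.
Proof.
move=> H; apply: ge_sup; first by exists `|x 0%N|, 0%N.
by move=> _ [n _ <-].
Qed.

Lemma c0norm_ge0 {x} : in_c0 x -> 0 <= c0norm x.
Proof. by move=> x0; apply: le_trans (coord_le_c0norm 0 x0). Qed.

Lemma in_c0_lin (a : R) {x y} : in_c0 x -> in_c0 y ->
  in_c0 (fun n => a *: x n + y n).
Proof.
move=> /in_c0P hx /in_c0P hy; apply/in_c0P => e e0.
have e2 : 0 < e / 2 by rewrite divr_gt0.
have [K1 h1] := hx _ (divr_gt0 e2 (ltr_wpDl (normr_ge0 a) ltr01)).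
have [K2 h2] := hy _ e2.
exists (maxn K1 K2) => n; rewrite geq_max => /andP [n1 n2].
rewrite (splitr e) (le_lt_trans (ler_normD _ _)) // ltrD ?h2 // normrZ.
by rewrite mulr_lt_of_lt_div ?h1.
Qed.

Lemma in_c0_scale (a : R) {x} : in_c0 x -> in_c0 (fun n => a *: x n).
Proof.
move=> hx; have h0 : in_c0 (fun n => (0 : X n)).
  by apply/in_c0P => e e0; exists 0%N => n _; rewrite normr0.
have -> : (fun n => a *: x n) = fun n => a *: x n + 0.
  by apply: functional_extensionality_dep => n; rewrite addr0.
exact: in_c0_lin.
Qed.

Lemma in_c0_sub {x y} : in_c0 x -> in_c0 y -> in_c0 (c0sub x y).
Proof.
move=> hx hy; have -> : c0sub x y = fun n => (-1) *: y n + x n.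
  by apply: functional_extensionality_dep => n; rewrite scaleN1r addrC.
exact: in_c0_lin.
Qed.

Lemma in_c0_finsupp x K : (forall n, (K <= n)%N -> x n = 0) -> in_c0 x.
Proof.
by move=> H; apply/in_c0P => e e0; exists K => n hn; rewrite H // normr0.
Qed.

Lemma coord_le_c0sub {x y} n : in_c0 x -> in_c0 y ->
  `|x n - y n| <= c0norm (c0sub x y).
Proof. by move=> hx hy; apply: (coord_le_c0norm n (in_c0_sub hx hy)). Qed.

Lemma ler_c0normB {x y} : in_c0 x -> in_c0 y ->
  c0norm x <= c0norm y + c0norm (c0sub x y).
Proof.
move=> hx hy; apply: c0norm_le => n.
rewrite -[x n](subrK (y n)) addrC (le_trans (ler_normD _ _)) //.
by apply: lerD; [exact: coord_le_c0norm | exact: coord_le_c0sub].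
Qed.

Lemma ler_c0distD {x y z} : in_c0 x -> in_c0 y -> in_c0 z ->
  c0norm (c0sub x z) <= c0norm (c0sub x y) + c0norm (c0sub y z).
Proof.
move=> hx hy hz; apply: c0norm_le => n.
rewrite (le_trans (ler_distD (y n) _ _)) //.
by apply: lerD; exact: coord_le_c0sub.
Qed.

Lemma c0normZ (a : R) {x} : in_c0 x ->
  c0norm (fun n => a *: x n) = `|a| * c0norm x.
Proof.
move=> hx; have hax := in_c0_scale a hx.
apply/le_anti/andP; split.
  by apply: c0norm_le => n; rewrite normrZ ler_wpM2l ?coord_le_c0norm.
have [->|a0] := eqVneq a 0.
  by rewrite normr0 mul0r c0norm_ge0 //; apply: in_c0_scale.
rewrite mulrC -ler_pdivlMr ?normr_gt0 //; apply: c0norm_le => n.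
by rewrite ler_pdivlMr ?normr_gt0 // mulrC -normrZ coord_le_c0norm.
Qed.

Definition c0normalize x : forall n, X n := fun n => (c0norm x)^-1 *: x n.

Lemma c0norm_normalize {x} : in_c0 x -> c0norm x != 0 ->
  c0norm (c0normalize x) = 1.
Proof.
move=> hx x0; rewrite c0normZ // normfV ger0_norm ?c0norm_ge0 //.
exact: mulVf.
Qed.

Lemma c0subC x y : c0norm (c0sub x y) = c0norm (c0sub y x).
Proof. by rewrite /c0norm /c0sub; under eq_fun do rewrite distrC. Qed.

Lemma c0dist_normalize {x v} : in_c0 x -> in_c0 v -> c0norm x = 1 ->
  c0norm v != 0 -> c0norm (c0sub x (c0normalize v)) <= 2 * c0norm (c0sub x v).
Proof.
move=> hx hv x1 v0; have vp : 0 < c0norm v by rewrite lt0r v0 c0norm_ge0.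
have hvv : c0norm (c0sub v (c0normalize v)) = `|c0norm v - 1|.
  have -> : c0sub v (c0normalize v) = fun n => (1 - (c0norm v)^-1) *: v n.
    apply: functional_extensionality_dep => n.
    by rewrite /c0sub /c0normalize scalerBl scale1r.
  rewrite c0normZ // -{2}(ger0_norm (ltW vp)) -normrM.
  by rewrite mulrBl mul1r mulVf.
have hxv : `|c0norm v - 1| <= c0norm (c0sub x v).
  have := ler_c0normB hx hv; have := ler_c0normB hv hx.
  by rewrite x1 c0subC ler_norml => ? ?; apply/andP; split; lra.
have := ler_c0distD hx hv (in_c0_scale (c0norm v)^-1 hv).
rewrite hvv; lra.
Qed.

End C0Sum.

Section CountableClosure.
Context {T : Type} {J : countType} (op : J -> seq T -> T) (seed : nat -> T).

Local Notation code := (nat + J * seq nat)%type.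

Fixpoint closure_enum (k : nat) : nat -> T :=
  if k is k'.+1 then fun i =>
    match @unpickle code i with
    | Some (inl i') => closure_enum k' i'
    | Some (inr (j, s)) => op j (map (closure_enum k') s)
    | None => closure_enum k' 0
    end
  else seed.

Definition closure_family (ki : nat * nat) : T := closure_enum ki.1 ki.2.

Definition lift_index (d i : nat) : nat :=
  iter d (fun i => pickle (inl i : code)) i.

Lemma closure_enum_lift k d i :
  closure_enum (d + k) (lift_index d i) = closure_enum k i.
Proof. by elim: d => //= d IH; rewrite pickleK. Qed.

Lemma closure_enum_liftP k k' i : (k <= k')%N ->
  closure_enum k' (lift_index (k' - k) i) = closure_enum k i.
Proof. by move=> hk; rewrite -{1}(subnK hk) closure_enum_lift. Qed.

Lemma closure_family_seq (s : seq (nat * nat)) :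
  exists k (t : seq nat), map closure_family s = map (closure_enum k) t.
Proof.
elim: s => [|[k i] s [k' [t IH]]]; first by exists 0%N, [::].
exists (maxn k k'),
  (lift_index (maxn k k' - k) i :: map (lift_index (maxn k k' - k')) t).
rewrite /= IH -map_comp closure_enum_liftP ?leq_maxl //; congr (_ :: _).
by apply: eq_map => j /=; rewrite closure_enum_liftP ?leq_maxr.
Qed.

Lemma closure_family_op j s :
  exists ki, closure_family ki = op j (map closure_family s).
Proof.
have [k [t ->]] := closure_family_seq s.
by exists (k.+1, pickle (inr (j, t) : code)); rewrite /closure_family /= pickleK.
Qed.

End CountableClosure.

Section Construction.
Context {R : realType} {X : nat -> normedModType R} {Y : normedModType R}.
Local Notation Z := (forall n, X n).
Local Notation sphere := (c0sphere_of (fun n => @setT (X n))).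
Variable Delta : Z -> Y.
Hypothesis Delta_sphere : forall x, sphere x -> `|Delta x| = 1.
Hypothesis Delta_surj : forall y : Y, `|y| = 1 -> exists2 x, sphere x & Delta x = y.
Hypothesis Delta_isometry : forall x y, sphere x -> sphere y ->
  `|Delta x - Delta y| = c0norm (c0sub x y).

Definition Delta_inv (y : Y) : Z :=
  match pselect (exists x, sphere x /\ Delta x = y) with
  | left h => projT1 (cid h)
  | right _ => fun n => 0
  end.

Lemma Delta_invP y : `|y| = 1 -> sphere (Delta_inv y) /\ Delta (Delta_inv y) = y.
Proof.
move=> y1; rewrite /Delta_inv; case: pselect => [h|[]]; first exact: projT2 (cid h).
by have [x Sx <-] := Delta_surj _ y1; exists x.
Qed.

(* Off the sphere [Delta] is arbitrary; those values must not enter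
   [image_span]. *)
Definition Delta_on_sphere (x : Z) : Y := if `[< sphere x >] then Delta x else 0.

Lemma Delta_on_sphereE x : sphere x -> Delta_on_sphere x = Delta x.
Proof. by move=> Sx; rewrite /Delta_on_sphere asboolT. Qed.

Definition sphere_preimage (s : seq (rat * Z)) : Z :=
  let w := \sum_(p <- s) ratr p.1 *: Delta_on_sphere p.2 in
  Delta_inv (`|w|^-1 *: w).

Definition finsupp_comb (s : seq (rat * nat * Z)) : Z :=
  fun m => \sum_(p <- s | p.1.2 == m) ratr p.1.1 *: p.2 m.

(* The label holds the rational coefficients (for [inr], also the target
   coordinates) of a combination of the argument list. *)
Definition family_op (j : seq rat + seq (rat * nat)) (xs : seq Z) : Z :=
  match j with
  | inl qs => sphere_preimage (zip qs xs)
  | inr ls => c0normalize (finsupp_comb (zip ls xs))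
  end.

Variable seed : nat -> Z.

Definition family : nat * nat -> Z := closure_family family_op seed.

Definition coord_span n : set (X n) := closed_span (fun ki => family ki n).

Definition image_span : set Y :=
  closed_span (fun ki => Delta_on_sphere (family ki)).

Definition family_comb (t : seq (rat * nat * (nat * nat))) : Z :=
  finsupp_comb [seq (p.1, family p.2) | p <- t].

Lemma family_seed i : family (0%N, i) = seed i.
Proof. by []. Qed.

Lemma family_sphere_preimage (s : seq (rat * (nat * nat))) :
  exists ki, family ki = sphere_preimage [seq (p.1, family p.2) | p <- s].
Proof.
have [ki hki] := closure_family_op family_op seed (inl (unzip1 s)) (unzip2 s).
by exists ki; rewrite /family hki /= zip_unzip_map.
Qed.

Lemma family_normalize (t : seq (rat * nat * (nat * nat))) :
  exists ki, family ki = c0normalize (family_comb t).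
Proof.
have [ki hki] := closure_family_op family_op seed (inr (unzip1 t)) (unzip2 t).
by exists ki; rewrite /family hki /= zip_unzip_map.
Qed.

Lemma image_span_approx {y e} : image_span y -> `|y| = 1 -> 0 < e ->
  exists ki, sphere (family ki) /\ `|y - Delta (family ki)| < e.
Proof.
move=> Ny y1 e0; set d := Num.min (e / 2) 1.
have d0 : 0 < d by rewrite lt_min ltr01 andbT divr_gt0.
have [de d1] : d <= e / 2 /\ d <= 1 by rewrite !ge_min !lexx orbT.
have [s hs] := closed_span_approx _ Ny _ d0.
set w := ratcomb _ s in hs.
have w0 : w != 0 by apply: contraTneq hs => ->; rewrite subr0 y1 -leNgt.
have [ki hki] := family_sphere_preimage s.
have [Sw Dw] := Delta_invP _ (normfZV w0).
have hpre :
    sphere_preimage [seq (p.1, family p.2) | p <- s] = Delta_inv (`|w|^-1 *: w).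
  by rewrite /sphere_preimage big_map.
exists ki; rewrite hki hpre Dw; split => //.
by apply: le_lt_trans (dist_normalize y1 w0) _; lra.
Qed.

Lemma family_comb_cat_coord t s K m :
  family_comb (t ++ [seq (p.1, K, p.2) | p <- s]) m =
  family_comb t m + (if K == m then ratcomb (fun ki => family ki m) s else 0).
Proof.
rewrite /family_comb /finsupp_comb map_cat big_cat; congr (_ + _).
by rewrite -map_comp big_map /=; case: eqVneq => // _; rewrite big_pred0_eq.
Qed.

Lemma family_comb_approx_upto {x d} K : (forall m, coord_span m (x m)) -> 0 < d ->
  exists t, (forall m, (m < K)%N -> `|x m - family_comb t m| < d) /\
            (forall m, (K <= m)%N -> family_comb t m = 0).
Proof.
move=> hM d0; elim: K => [|K [t [h1 h2]]].
  by exists [::]; split=> // m _; rewrite /family_comb /finsupp_comb big_nil.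
have [s hs] := closed_span_approx _ (hM K) _ d0.
exists (t ++ [seq (p.1, K, p.2) | p <- s]).
split=> m hm; rewrite family_comb_cat_coord.
  case: (ltnP m K) => hmK; first by rewrite (gtn_eqF hmK) addr0 h1.
  have -> : m = K by apply/eqP; rewrite eqn_leq hmK -ltnS hm.
  by rewrite eqxx h2 // add0r.
by rewrite h2 ?(ltnW hm) // (ltn_eqF hm) addr0.
Qed.

Lemma family_comb_approx {x d} : in_c0 x -> (forall m, coord_span m (x m)) ->
  0 < d -> exists t, in_c0 (family_comb t) /\ c0norm (c0sub x (family_comb t)) < d.
Proof.
move=> x0 hM d0; have d2 : 0 < d / 2 by rewrite divr_gt0.
have [K hK] := (in_c0P x).1 x0 _ d2.
have [t [h1 h2]] := family_comb_approx_upto K hM d2.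
exists t; split; first exact: in_c0_finsupp h2.
apply: (le_lt_trans (y := d / 2)); last by rewrite ltr_pdivrMr // ltr_pMr // ltr1n.
apply: c0norm_le => m; rewrite /c0sub; case: (ltnP m K) => hm; first exact/ltW/h1.
by rewrite h2 // subr0; exact/ltW/hK.
Qed.

Lemma coord_sphere_approx {x e} : c0sphere_of coord_span x -> 0 < e ->
  exists ki, sphere (family ki) /\ c0norm (c0sub x (family ki)) < e.
Proof.
move=> [[x0 hM] x1] e0; set d := Num.min (e / 2) 1.
have d0 : 0 < d by rewrite lt_min ltr01 andbT divr_gt0.
have [de d1] : d <= e / 2 /\ d <= 1 by rewrite !ge_min !lexx orbT.
have [t [v0 hv]] := family_comb_approx x0 hM d0.
have nv : c0norm (family_comb t) != 0.
  by have := ler_c0normB x0 v0; rewrite x1; apply: contraTneq => ->; lra.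
have [ki hki] := family_normalize t.
exists ki; rewrite hki; split.
  by split; [split; [exact: in_c0_scale|] | exact: c0norm_normalize].
by apply: le_lt_trans (c0dist_normalize x0 v0 x1 nv) _; lra.
Qed.

Lemma coord_span_approx x n : in_c0 x ->
  (forall e : R, 0 < e ->
     exists2 ki, in_c0 (family ki) & c0norm (c0sub x (family ki)) < e) ->
  coord_span n (x n).
Proof.
move=> x0 hx; have [_ [_ cM]] := closed_span_subspace (fun ki => family ki n).
apply: closed_approx cM _ => e e0; have [ki f0 hki] := hx e e0.
exists (family ki n); first exact: closed_span_gen.
exact: le_lt_trans (coord_le_c0sub n x0 f0) hki.
Qed.

Lemma image_coord_sphere : Delta @` c0sphere_of coord_span = sphere_of image_span.
Proof.
apply/seteqP; split => [_ [x Mx <-]|y [Ny y1]].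
  have Sx : sphere x by case: Mx => [[x0 _] x1].
  split; last exact: Delta_sphere.
  have [_ [_ cN]] := closed_span_subspace (fun ki => Delta_on_sphere (family ki)).
  apply: closed_approx cN _ => e e0.
  have [ki [Ski hki]] := coord_sphere_approx Mx e0.
  exists (Delta (family ki)); last by rewrite Delta_isometry.
  by rewrite -Delta_on_sphereE //; exact: closed_span_gen.
have [x Sx Dx] := Delta_surj _ y1.
exists x => //; case: Sx => [[x0 _] x1]; split => //; split => // n.
apply: coord_span_approx => // e e0.
have [ki [Ski hki]] := image_span_approx Ny y1 e0.
exists ki; first by case: Ski => [[]].
by rewrite -Dx Delta_isometry in hki.
Qed.

End Construction.

Theorem lemma3p5 (R : realType) (X : nat -> completeNormedModType R)
  (A : set (forall n, X n))
  (hA0 : A `<=` c0sum_of (fun n => @setT (X n)))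
  (hA : c0separable A)
  (Y : completeNormedModType R) (Delta : (forall n, X n) -> Y)
  (hmaps : forall x, c0sphere_of (fun n => @setT (X n)) x -> `|Delta x| = 1)
  (hsurj : forall y : Y, `|y| = 1 ->
     exists2 x, c0sphere_of (fun n => @setT (X n)) x & Delta x = y)
  (hiso : forall x y, c0sphere_of (fun n => @setT (X n)) x ->
     c0sphere_of (fun n => @setT (X n)) y ->
     `|Delta x - Delta y| = c0norm (c0sub x y)) :
  exists (M : forall n, set (X n)) (N : set Y),
    (forall n, is_subspace (M n) /\ separable_in (M n)) /\
    is_subspace N /\ separable_in N /\
    A `<=` c0sum_of M /\
    Delta @` c0sphere_of M = sphere_of N.
Proof.
have [D [cD [DA Ddense]]] := hA.
have [seed hseed] := countable_sub_range (fun n => 0 : X n) cD.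
exists (coord_span Delta seed), (image_span Delta seed).
split.
  by move=> n; split; [exact: closed_span_subspace | exact: closed_span_separable].
split; first exact: closed_span_subspace.
split; first exact: closed_span_separable.
split; last exact: image_coord_sphere.
move=> a Aa; have [a0 _] := hA0 a Aa; split => // n.
apply: coord_span_approx => // e e0.
have [d Dd hd] := Ddense a Aa e e0; have [i _ hi] := hseed d Dd.
by exists (0%N, i); rewrite family_seed hi //; case: (hA0 d (DA d Dd)).
Qed.
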